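(* Let $G$ act by isometries on a $\delta$-hyperbolic geodesic space $X$, let $\alpha\ge3\delta$ and let $U\subset G$ be $\alpha$-reduced at $p\in X$. Then for every $w\in\mathbf F(U)$, $$2\alpha|w|_U\le|wp-p|\le L(U,p)\,|w|_U.$$ In particular the natural homomorphism $\mathbf F(U)\to G$ is injective.
   Context: Hyperbolicity: $(x,z)_t\ge\min\{(x,y)_t,(y,z)_t\}-\delta$ with $(x,y)_z=\frac12(|x-z|+|y-z|-|x-y|)$. $U\subset G$ finite is $\alpha$-reduced at $p$ if $U\cap U^{-1}=\varnothing$ and for distinct $u_1,u_2\in U\sqcup U^{-1}$, $(u_1p,u_2p)_p<\frac12\min\{|u_1p-p|,|u_2p-p|\}-\alpha-50\delta$. $\mathbf F(U)$ is the free group on $U$, $|w|_U$ its word length, and $wp$ means the image of $w$ in $G$ applied to $p$. $L(U,p)=\max_{u\in U}|up-p|$. *)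

From HB Require Import structures.
From mathcomp Require Import all_boot all_order all_algebra.
From mathcomp Require Import reals.
Set Implicit Arguments. Unset Strict Implicit. Unset Printing Implicit Defensive.
Import Order.TTheory GRing.Theory Num.Theory.

Section Defs.
Variable R : realType.
Variable X : Type.
Variable d : X -> X -> R.

Local Open Scope ring_scope.

Definition is_metric : Prop :=
  [/\ (forall x y, d x y = 0 <-> x = y),
      (forall x y, d x y = d y x) &
      (forall x y z, d x z <= d x y + d y z)].

Definition gromov (x y z : X) : R := (d x z + d y z - d x y) / 2.

Definition hyperbolic (delta : R) : Prop :=
  forall x y z t : X,
    gromov x z t >= Num.min (gromov x y t) (gromov y z t) - delta.

Definition geodesic : Prop :=
  forall x y : X, exists gam : R -> X,
    [/\ gam 0 = x, gam (d x y) = y &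
        forall s t, 0 <= s <= d x y -> 0 <= t <= d x y ->
          d (gam s) (gam t) = `|s - t| ].
End Defs.

Section GroupDefs.
Local Open Scope group_scope.
Variable G : groupType.

Definition isometric_action (R : realType) (X : Type) (d : X -> X -> R)
    (act : G -> X -> X) : Prop :=
  [/\ (forall x, act 1 x = x),
      (forall g h x, act (g * h) x = act g (act h x)) &
      (forall g x y, d (act g x) (act g y) = d x y)].

Definition alpha_reduced (R : realType) (X : Type) (d : X -> X -> R)
    (act : G -> X -> X) (delta alpha : R) (U : seq G) (p : X) : Prop :=
  (forall u, u \in U -> u^-1 \notin U) /\
  (forall u1 u2, u1 \in U ++ [seq u^-1 | u <- U] -> u2 \in U ++ [seq u^-1 | u <- U] ->
     u1 != u2 ->
     (gromov d (act u1 p) (act u2 p) p <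
        Num.min (d (act u1 p) p) (d (act u2 p) p) / 2 - alpha - 50 * delta)%R).

(* Free group F(U) modelled by reduced words: a letter (u, b) stands for
   u if b = false and for u^-1 if b = true. *)
Definition letter_val (l : G * bool) : G := if l.2 then l.1^-1 else l.1.

Fixpoint no_cancel (w : seq (G * bool)) : bool :=
  match w with
  | l1 :: ((l2 :: _) as w') =>
      ~~ ((l1.1 == l2.1) && (l1.2 != l2.2)) && no_cancel w'
  | _ => true
  end.

Definition reduced_word (U : seq G) (w : seq (G * bool)) : bool :=
  all (fun l => l.1 \in U) w && no_cancel w.

Definition word_eval (w : seq (G * bool)) : G :=
  foldr (fun l g => letter_val l * g) 1 w.

Definition word_length (w : seq (G * bool)) : nat := size w.

Definition Lmax (R : realType) (X : Type) (d : X -> X -> R)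
    (act : G -> X -> X) (U : seq G) (p : X) : R :=
  (\big[Num.max/0%R]_(u <- U) d (act u p) p)%R.
End GroupDefs.

From HB Require Import structures.
From mathcomp Require Import all_boot all_order all_algebra.
From mathcomp Require Import reals.
From mathcomp Require Import lra.
Import Order.TTheory GRing.Theory Num.Theory.

(** Write |g| for |gp - p|.  For g, h in G one has
      |gh| = |g| + |h| - 2 (g^-1 p, hp)_p   and   (gp, ghp)_p = |g| - (g^-1 p, hp)_p.
   Reading a reduced word v_1 ... v_n from the right, g = v_1 ... v_n satisfies
   (v_1 p, gp)_p > |v_1|/2 + alpha + 49 delta, while for every other letter a,
   hyperbolicity and reducedness force (ap, gp)_p <= (ap, v_1 p)_p + delta.
   As v_1^-1 is not the next letter, the second property of the tail makes
   (v_1^-1 p, v_2 ... v_n p)_p small, so every letter adds more than 2 alpha to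
   the displacement; and the first letter of a reduced word is determined by
   its value.  The upper bound is the triangle inequality.  Only the
   four-point condition is used, not the geodesic hypothesis. *)

Set Implicit Arguments.
Unset Strict Implicit.
Unset Printing Implicit Defensive.

Local Open Scope ring_scope.

Section Development.

Variables (R : realType) (X : Type) (d : X -> X -> R).
Hypothesis d_metric : is_metric d.

Lemma metric_sym x y : d x y = d y x.
Proof. by case: d_metric. Qed.

Lemma metric_xx x : d x x = 0.
Proof. by case: d_metric => eq0 _ _; apply/eq0. Qed.

Lemma metric_triangle x y z : d x z <= d x y + d y z.
Proof. by case: d_metric. Qed.

Lemma metric_ge0 x y : 0 <= d x y.
Proof. by have := metric_triangle x y x; rewrite metric_xx (metric_sym y); lra. Qed.

Lemma gromovC x y z : gromov d x y z = gromov d y x z.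
Proof. by rewrite /gromov (metric_sym x y) (addrC (d x z)). Qed.

Lemma gromov_ge0 x y z : 0 <= gromov d x y z.
Proof.
by rewrite /gromov; have := metric_triangle x z y; rewrite (metric_sym z y); lra.
Qed.

Lemma gromov_base_r x z : gromov d x z z = 0.
Proof. by rewrite /gromov metric_xx; lra. Qed.

Variable delta : R.
Hypothesis d_hyperbolic : hyperbolic d delta.

Lemma hyperbolic_gromov_le x y z t :
  gromov d x z t + delta < gromov d y z t ->
  gromov d x y t <= gromov d x z t + delta.
Proof.
move=> lt_xz_yz; have := d_hyperbolic x y z t.
by rewrite lerBlDr ge_min => /orP [//|]; lra.
Qed.

Variables (G : groupType) (act : G -> X -> X) (p : X).
Hypothesis act_isometric : isometric_action d act.

Lemma act1 x : act 1%g x = x.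
Proof. by case: act_isometric. Qed.

Lemma actM g h x : act (g * h)%g x = act g (act h x).
Proof. by case: act_isometric. Qed.

Lemma act_dist g x y : d (act g x) (act g y) = d x y.
Proof. by case: act_isometric. Qed.

Lemma actKV g x : act g (act g^-1 x)%g = x.
Proof. by rewrite -actM mulgV act1. Qed.

Definition disp (g : G) : R := d (act g p) p.

Lemma disp1 : disp 1%g = 0.
Proof. by rewrite /disp act1 metric_xx. Qed.

Lemma disp_ge0 g : 0 <= disp g.
Proof. exact: metric_ge0. Qed.

Lemma dispV g : disp g^-1%g = disp g.
Proof. by rewrite /disp -(act_dist g) actKV metric_sym. Qed.

Lemma disp_mul g h :
  disp (g * h)%g = disp g + disp h - 2 * gromov d (act g^-1 p)%g (act h p) p.
Proof.
rewrite /gromov -(act_dist g (act g^-1 p)%g (act h p)) actKV -actM (metric_sym p).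
by rewrite -[d (act g^-1 p)%g p]/(disp g^-1%g) dispV /disp; lra.
Qed.

Lemma gromov_translate g x :
  gromov d (act g p) (act g x) p = disp g - gromov d (act g^-1 p)%g x p.
Proof.
rewrite /gromov act_dist -(act_dist g (act g^-1 p)%g x) actKV.
rewrite -[d (act g^-1 p)%g p]/(disp g^-1%g) dispV /disp (metric_sym p x).
by rewrite (metric_sym p (act g x)); lra.
Qed.

Lemma disp_mul_le g h : disp (g * h)%g <= disp g + disp h.
Proof. by rewrite disp_mul; have := gromov_ge0 (act g^-1 p)%g (act h p) p; lra. Qed.

Definition prodg (vs : seq G) : G := foldr *%g 1%g vs.

Lemma prodg_disp_le (L : R) vs :
  all (fun v => disp v <= L) vs -> disp (prodg vs) <= L * (size vs)%:R.
Proof.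
elim: vs => [|v vs IH] /=; first by rewrite disp1 mulr0.
case/andP => le_vL /IH le_vsL; rewrite -natr1 mulrDr mulr1.
by have := disp_mul_le v (prodg vs); lra.
Qed.

Variables (alpha : R) (U : seq G).
Hypotheses (delta_ge0 : 0 <= delta) (alpha_ge0 : 0 <= alpha).
Hypothesis U_reduced : alpha_reduced d act delta alpha U p.

(* [lra] does not use section hypotheses. *)
Local Ltac lra_nonneg := have := delta_ge0; have := alpha_ge0; lra.

Definition alphabet : seq G := U ++ [seq u^-1 | u <- U]%g.

Lemma alphabetV a : a \in alphabet -> a^-1%g \in alphabet.
Proof.
rewrite !mem_cat => /orP [aU | /mapP [u uU ->]]; last by rewrite invgK uU.
by rewrite map_f ?orbT.
Qed.

Lemma alphabet_neqV a : a \in alphabet -> a != a^-1%g.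
Proof.
case: U_reduced => disjoint _; rewrite mem_cat => /orP [aU | /mapP [u uU ->]].
  by apply/eqP => e; move: (disjoint _ aU); rewrite -e aU.
by rewrite invgK; apply/eqP => e; move: (disjoint _ uU); rewrite e uU.
Qed.

Lemma reduced_gromov_lt a b : a \in alphabet -> b \in alphabet -> a != b ->
  gromov d (act a p) (act b p) p < disp b / 2 - alpha - 50 * delta.
Proof.
case: U_reduced => _ reduced a_in b_in ab; have := reduced a b a_in b_in ab.
have : Num.min (d (act a p) p) (d (act b p) p) <= d (act b p) p.
  by rewrite ge_min lexx orbT.
by rewrite /disp; lra.
Qed.

Lemma alphabet_disp_gt a : a \in alphabet -> 2 * alpha + 100 * delta < disp a.
Proof.
move=> a_in; have aV_neq : a^-1%g != a by rewrite eq_sym alphabet_neqV.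
have := reduced_gromov_lt (alphabetV a_in) a_in aV_neq.
by have := gromov_ge0 (act a^-1 p)%g (act a p) p; lra.
Qed.

Lemma disp_letter_val_le (l : G * bool) :
  l.1 \in U -> disp (letter_val l) <= Lmax d act U p.
Proof.
move=> lU; have -> : disp (letter_val l) = disp l.1.
  by case: l lU => u [] // _; rewrite /letter_val dispV.
exact: le_bigmax_seq.
Qed.

(* [gp] lies deep in the shadow of [vp] seen from [p], and is close to the
   direction of no other letter. *)
Definition in_shadow (v g : G) : Prop :=
  (forall a, a \in alphabet -> a != v ->
     gromov d (act a p) (act g p) p <= gromov d (act a p) (act v p) p + delta) /\
  disp v / 2 + alpha + 49 * delta < gromov d (act v p) (act g p) p.

Lemma not_in_shadow1 v : ~ in_shadow v 1%g.
Proof. case=> _; rewrite act1 gromov_base_r; have := disp_ge0 v; lra_nonneg. Qed.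

Lemma in_shadow_uniq v w g : v \in alphabet -> w \in alphabet ->
  in_shadow v g -> in_shadow w g -> v = w.
Proof.
move=> v_in w_in [close_v _] [_ far_w]; case: (eqVneq v w) => // vw; exfalso.
have wv : w != v by rewrite eq_sym.
have := close_v w w_in wv; have := reduced_gromov_lt v_in w_in vw.
by rewrite gromovC; lra_nonneg.
Qed.

Lemma in_shadow_mul v g : v \in alphabet ->
  gromov d (act v^-1 p)%g (act g p) p < disp v / 2 - alpha - 49 * delta ->
  in_shadow v (v * g)%g /\ disp g + 2 * alpha < disp (v * g)%g.
Proof.
move=> v_in small.
have far : disp v / 2 + alpha + 49 * delta < gromov d (act v p) (act (v * g) p)%g p.
  by rewrite actM gromov_translate; lra.
split; last by rewrite disp_mul; lra_nonneg.
split=> // a a_in av; apply: hyperbolic_gromov_le.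
rewrite [gromov d (act (v * g) p)%g _ _]gromovC.
by have := reduced_gromov_lt a_in v_in av; lra_nonneg.
Qed.

Lemma in_shadow_gromovV v w g :
  v \in alphabet -> w \in alphabet -> v^-1%g != w -> in_shadow w g ->
  gromov d (act v^-1 p)%g (act g p) p < disp v / 2 - alpha - 49 * delta.
Proof.
move=> v_in w_in vw [close _]; have := close _ (alphabetV v_in) vw.
have wv : w != v^-1%g by rewrite eq_sym.
have := reduced_gromov_lt w_in (alphabetV v_in) wv.
by rewrite dispV gromovC; lra.
Qed.

Definition backtrack_free : rel G := fun a b => a^-1%g != b.

Lemma path_in_shadow v t : v \in alphabet -> all (mem alphabet) t ->
  path backtrack_free v t ->
  in_shadow v (prodg (v :: t)) /\ 2 * alpha * (size t).+1%:R < disp (prodg (v :: t)).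
Proof.
elim: t v => [|w t IH] v v_in /=.
  move=> _ _; have small :
      gromov d (act v^-1 p)%g (act 1 p)%g p < disp v / 2 - alpha - 49 * delta.
    by rewrite act1 gromov_base_r; have := alphabet_disp_gt v_in; lra_nonneg.
  by have [] := in_shadow_mul v_in small; rewrite disp1 add0r mulr1.
case/andP => w_in t_in /andP [vw wt].
have [sh_w lt_w] := IH w w_in t_in wt.
have [sh_v lt_v] := in_shadow_mul v_in (in_shadow_gromovV v_in w_in vw sh_w).
split => //; rewrite -natr1 mulrDr mulr1.
by move: lt_w lt_v; set n := 2 * alpha * _; lra.
Qed.

Definition freely_reduced (vs : seq G) : bool :=
  all (mem alphabet) vs && sorted backtrack_free vs.

Lemma freely_reduced_disp_ge vs :
  freely_reduced vs -> 2 * alpha * (size vs)%:R <= disp (prodg vs).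
Proof.
case: vs => [|v vs] /=; first by rewrite disp1 mulr0.
by case/andP=> /andP [v_in vs_in] /(path_in_shadow v_in vs_in) [_ /ltW].
Qed.

Lemma freely_reduced_prodg_inj vs ws :
  freely_reduced vs -> freely_reduced ws -> prodg vs = prodg ws -> vs = ws.
Proof.
elim: vs ws => [|v vs IH] [|w ws] //=.
- move=> _ /andP [/andP [w_in ws_in] /(path_in_shadow w_in ws_in) [sh_w _]] e.
  by case: (@not_in_shadow1 w); rewrite e.
- move=> /andP [/andP [v_in vs_in] /(path_in_shadow v_in vs_in) [sh_v _]] _ e.
  by case: (@not_in_shadow1 v); rewrite -e.
move=> /andP [/andP [v_in vs_in] v_path] /andP [/andP [w_in ws_in] w_path] e.
have [sh_v _] := path_in_shadow v_in vs_in v_path.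
have [sh_w _] := path_in_shadow w_in ws_in w_path.
have sh_w' : in_shadow w (v * prodg vs)%g by rewrite e.
have vw : v = w := in_shadow_uniq v_in w_in sh_v sh_w'.
move: e; rewrite vw => /mulgI e.
congr (_ :: _); apply: (IH ws _ _ e).
  by apply/andP; split=> //; apply: path_sorted v_path.
by apply/andP; split=> //; apply: path_sorted w_path.
Qed.

End Development.

Section ReducedWords.

Variables (G : groupType) (U : seq G).
Hypothesis U_disjoint : forall u, u \in U -> u^-1%g \notin U.

Lemma word_eval_prodg w : word_eval w = prodg (map (@letter_val G) w).
Proof. by rewrite /prodg foldr_map. Qed.

Lemma letter_val_in l : l.1 \in U -> letter_val l \in alphabet U.
Proof.
by case: l => u [] /= uU; rewrite /letter_val mem_cat /= ?uU // map_f ?orbT.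
Qed.

Lemma letter_val_flip (l : G * bool) : letter_val (l.1, ~~ l.2) = (letter_val l)^-1%g.
Proof. by case: l => u [] /=; rewrite ?invgK. Qed.

Lemma letter_val_inj l1 l2 : l1.1 \in U -> l2.1 \in U ->
  letter_val l1 = letter_val l2 -> l1 = l2.
Proof.
case: l1 l2 => [u1 []] [u2 []] /= u1U u2U; rewrite /letter_val /= => e.
- by rewrite (invg_inj e).
- by move: (U_disjoint u1U); rewrite e u2U.
- by move: (U_disjoint u2U); rewrite -e u1U.
- by rewrite e.
Qed.

Lemma map_letter_val_inj w1 w2 :
  all (fun l => l.1 \in U) w1 -> all (fun l => l.1 \in U) w2 ->
  map (@letter_val G) w1 = map (@letter_val G) w2 -> w1 = w2.
Proof.
elim: w1 w2 => [|l1 w1 IH] [|l2 w2] //= /andP [l1U w1U] /andP [l2U w2U] [e es].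
by rewrite (letter_val_inj l1U l2U e) (IH w2).
Qed.

Lemma reduced_word_freely_reduced w :
  reduced_word U w -> freely_reduced U (map (@letter_val G) w).
Proof.
case/andP=> wU w_nc; apply/andP; split.
  by rewrite all_map; apply: sub_all wU => l /letter_val_in.
elim: w wU w_nc => [|l1 [|l2 w] IH] //= /andP [l1U w2U] /andP [no_cancel12 w2_nc].
move: (IH w2U w2_nc) => /= ->; rewrite andbT.
move: no_cancel12; apply: contra => /eqP; rewrite -letter_val_flip.
move=> /letter_val_inj <- //=; last by case/andP: w2U.
by rewrite eqxx; case: l1.2.
Qed.

End ReducedWords.

Theorem mainTheorem10 (G : groupType) (R : realType) (X : Type)
    (d : X -> X -> R) (act : G -> X -> X) (delta alpha : R)
    (U : seq G) (p : X) :
  is_metric d -> geodesic d -> (0 <= delta)%R -> hyperbolic d delta ->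
  isometric_action d act ->
  (3 * delta <= alpha)%R ->
  alpha_reduced d act delta alpha U p ->
  (forall w : seq (G * bool), reduced_word U w ->
     (2 * alpha * (word_length w)%:R <= d (act (word_eval w) p) p)%R /\
     (d (act (word_eval w) p) p <= Lmax d act U p * (word_length w)%:R)%R) /\
  (forall w1 w2 : seq (G * bool), reduced_word U w1 -> reduced_word U w2 ->
     word_eval w1 = word_eval w2 -> w1 = w2).
Proof.
move=> d_metric _ delta_ge0 d_hyp act_isom alpha_ge_3delta U_reduced.
have alpha_ge0 : 0 <= alpha by lra.
have [U_disjoint _] := U_reduced.
split=> [w w_red | w1 w2 w1_red w2_red].
  rewrite /word_length word_eval_prodg -(size_map (@letter_val G)); split.
    exact: (freely_reduced_disp_ge d_metric d_hyp act_isom delta_ge0 alpha_ge0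
      U_reduced (reduced_word_freely_reduced U_disjoint w_red)).
  apply: (prodg_disp_le d_metric act_isom); rewrite all_map.
  case/andP: w_red => wU _; apply: sub_all wU => l /= lU.
  exact: (disp_letter_val_le d_metric p act_isom lU).
case/andP: (w1_red) (w2_red) => [w1U _] /andP [w2U _].
rewrite !word_eval_prodg => e; apply: (map_letter_val_inj U_disjoint w1U w2U).
apply: (freely_reduced_prodg_inj d_metric d_hyp act_isom delta_ge0 alpha_ge0
  U_reduced _ _ e); exact: reduced_word_freely_reduced.
Qed.
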